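(* Let $\alpha\ge0$, $\mu\ge0$. For every uniformly continuous function $g$ on $[0,\infty)$, every $n\in\mathbb{N}$ and every $x\in[0,\infty)$, $$|T_n(g;x)-g(x)|\le\left(1+\sqrt{\frac1n x\left(4x^3\alpha^2+4x\alpha+n\right)+2\mu x\frac{e_\mu(-nx)}{e_\mu(nx)}}\right)\omega\!\left(g;\frac{1}{\sqrt n}\right).$$
   Context: The modulus of continuity is $\omega(g;\delta)=\sup\{|g(s)-g(t)|: s,t\in[0,\infty),\ |s-t|\le\delta\}$. For $\mu>-\tfrac12$ define $\gamma_\mu(2k)=\dfrac{2^{2k}k!\,\Gamma(k+\mu+1/2)}{\Gamma(\mu+1/2)}$ and $\gamma_\mu(2k+1)=\dfrac{2^{2k+1}k!\,\Gamma(k+\mu+3/2)}{\Gamma(\mu+1/2)}$, $k\ge0$; $e_\mu(x)=\sum_{k\ge0} x^k/\gamma_\mu(k)$; $\theta_k=0$ if $k$ is even and $\theta_k=1$ if $k$ is odd. Let $h_k^\mu(\xi,\alpha)=\gamma_\mu(k)\sum_{j=0}^{\lfloor k/2\rfloor}\dfrac{\alpha^j\xi^{k-2j}}{j!\,\gamma_\mu(k-2j)}$. For $\alpha\ge0,\mu\ge0$, $n\in\mathbb{N}$ and $x\in[0,\infty)$ define $$T_n(f;x)=\frac{1}{e^{\alpha x^2}e_\mu(nx)}\sum_{k=0}^\infty \frac{h_k^\mu(n,\alpha)}{\gamma_\mu(k)}x^k f\!\left(\frac{k+2\mu\theta_k}{n}\right).$$ *)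

From Stdlib Require Import Reals Lra.
From Coquelicot Require Import Coquelicot.
Open Scope R_scope.

(* Rising factorial: poch a m = a (a+1) ... (a+m-1) = Gamma(a+m)/Gamma(a). *)
Fixpoint poch (a : R) (m : nat) : R :=
  match m with
  | O => 1
  | S m' => poch a m' * (a + INR m')
  end.

(* gamma_mu(2k)   = 2^{2k} k! Gamma(k+mu+1/2)/Gamma(mu+1/2)
   gamma_mu(2k+1) = 2^{2k+1} k! Gamma(k+mu+3/2)/Gamma(mu+1/2) *)
Definition gamma_mu (mu : R) (k : nat) : R :=
  if Nat.even k
  then 2 ^ k * INR (Factorial.fact (Nat.div2 k)) * poch (mu + /2) (Nat.div2 k)
  else 2 ^ k * INR (Factorial.fact (Nat.div2 k)) * poch (mu + /2) (S (Nat.div2 k)).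

Definition e_mu (mu x : R) : R := Series (fun k => x ^ k / gamma_mu mu k).

Definition theta (k : nat) : R := if Nat.even k then 0 else 1.

Definition h_mu (mu : R) (k : nat) (xi alpha : R) : R :=
  gamma_mu mu k *
  sum_f_R0 (fun j => alpha ^ j * xi ^ (k - 2 * j) /
                     (INR (Factorial.fact j) * gamma_mu mu (k - 2 * j))) (Nat.div2 k).

Definition T_op (alpha mu : R) (n : nat) (f : R -> R) (x : R) : R :=
  / (exp (alpha * x ^ 2) * e_mu mu (INR n * x)) *
  Series (fun k => h_mu mu k (INR n) alpha / gamma_mu mu k * x ^ k *
                   f ((INR k + 2 * mu * theta k) / INR n)).

Definition omega (g : R -> R) (delta : R) : Rbar :=
  Lub_Rbar (fun y => exists s t, 0 <= s /\ 0 <= t /\ Rabs (s - t) <= delta /\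
                                 y = Rabs (g s - g t)).

Definition unif_cont_nonneg (g : R -> R) : Prop :=
  forall eps, 0 < eps -> exists delta, 0 < delta /\
    forall s t, 0 <= s -> 0 <= t -> Rabs (s - t) < delta -> Rabs (g s - g t) < eps.

From Stdlib Require Import Reals Lra Lia.
From Coquelicot Require Import Coquelicot.
Open Scope R_scope.

(* The weights of T_n form the Cauchy product of the exponential series of
   exp(alpha x^2), spread onto the even indices, with the series of e_mu(n x);
   since theta is 2-periodic, the nodes k + 2 mu theta_k are additive along this
   product.  Hence the moments of T_n follow from those of the two factors, and
   those come from gamma_mu(k+1) = gamma_mu(k) (k + 1 + 2 mu theta_(k+1)); the
   alternating part 2 mu (-1)^k of the node increments is what produces
   e_mu(-n x).  The estimate itself is the classical one for positive operators:
   |g s - g t| <= (1 + |s - t| / delta) omega(g; delta), then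
   |s - t| <= ((s - t)^2 / sigma + sigma) / 2 with sigma the square root of the
   second central moment. *)

(* Coquelicot states these for [scal] and [plus], which do not unify with goals
   written with [Rmult] and [Rplus]. *)
Lemma is_series_scal_l_R (c : R) (a : nat -> R) (l : R) :
  is_series a l -> is_series (fun k => c * a k) (c * l).
Proof. exact (is_series_scal_l c a l). Qed.

Lemma is_series_plus_R (a b : nat -> R) (la lb : R) :
  is_series a la -> is_series b lb -> is_series (fun k => a k + b k) (la + lb).
Proof. exact (is_series_plus a b la lb). Qed.

Lemma is_series_ext_eq (a b : nat -> R) (la lb : R) :
  (forall k, a k = b k) -> la = lb -> is_series a la -> is_series b lb.
Proof. intros Hab <-. exact (is_series_ext a b la Hab). Qed.

Lemma is_series_of_succ (a : nat -> R) (l : R) :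
  a O = 0 -> is_series (fun k => a (S k)) l -> is_series a l.
Proof.
  intros Ha0 H. apply is_series_decr_1. rewrite Ha0.
  change (is_series (fun k => a (S k)) (l + - 0)). rewrite Ropp_0, Rplus_0_r. exact H.
Qed.

Lemma is_series_first_le (a : nat -> R) (l : R) :
  (forall k, 0 <= a k) -> is_series a l -> a O <= l.
Proof.
  intros Ha H.
  assert (Hex : ex_series a) by (eexists; exact H).
  rewrite <- (is_series_unique a l H), Series_incr_1 by exact Hex.
  assert (Htail : 0 <= Series (fun k => a (S k))).
  { replace 0 with (Series (fun _ => 0 * 0)) by (rewrite Series_scal_l; ring).
    apply Series_le; [intros k; rewrite Rmult_0_l; split; [lra | apply Ha]|].
    exact (proj1 (ex_series_incr_1 a) Hex). }
  lra.
Qed.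

Lemma Rabs_Series_le (a b : nat -> R) (l : R) :
  is_series b l -> (forall k, Rabs (a k) <= b k) -> Rabs (Series a) <= l.
Proof.
  intros Hb Hab.
  assert (Hex : ex_series (fun k => Rabs (a k))).
  { apply (@ex_series_le R_AbsRing R_CompleteNormedModule) with b; [|eexists; exact Hb].
    intros k. rewrite Rabs_Rabsolu. apply Hab. }
  apply Rle_trans with (1 := Series_Rabs a Hex).
  rewrite <- (is_series_unique b l Hb).
  apply Series_le; [intros k; split; [apply Rabs_pos | apply Hab] | eexists; exact Hb].
Qed.

Lemma is_series_spread_even (a : nat -> R) (l : R) :
  is_series a l -> is_series (fun i => if Nat.even i then a (Nat.div2 i) else 0) l.
Proof.
  intros Ha.
  set (b := fun i => if Nat.even i then a (Nat.div2 i) else 0).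
  assert (Hb : is_pseries b 1 (l + 1 * (0 * l))).
  { apply is_pseries_odd_even; apply is_pseries_R.
    - apply (is_series_ext_eq a _ l); [|reflexivity|exact Ha].
      intros k. unfold b. rewrite Nat.even_even, Nat.div2_double, pow1, pow1. ring.
    - apply (is_series_ext_eq (fun k => 0 * a k) _ (0 * l));
        [|reflexivity|apply is_series_scal_l_R, Ha].
      intros k. unfold b. rewrite Nat.even_odd. ring. }
  apply is_pseries_R in Hb.
  apply (is_series_ext_eq (fun i => b i * 1 ^ i) _ (l + 1 * (0 * l))); [|ring|exact Hb].
  intros i. rewrite pow1. apply Rmult_1_r.
Qed.

(** * The nodes and the coefficients gamma_mu *)

Definition node (mu : R) (k : nat) : R := INR k + 2 * mu * theta k.

Lemma node_add_even (mu : R) (i m : nat) :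
  Nat.even i = true -> node mu (i + m) = INR i + node mu m.
Proof.
  intros Hi. apply Nat.even_spec in Hi. destruct Hi as [d ->].
  unfold node, theta. rewrite plus_INR, Nat.add_comm, Nat.even_add_mul_2. ring.
Qed.

Lemma node_S (mu : R) (m : nat) : node mu (S m) = node mu m + 1 + 2 * mu * (-1) ^ m.
Proof.
  unfold node, theta. rewrite S_INR.
  destruct (Nat.Even_or_Odd m) as [[d ->]|[d ->]].
  - replace (S (2 * d)) with (2 * d + 1)%nat by lia.
    rewrite Nat.even_odd, Nat.even_even, pow_1_even. ring.
  - replace (S (2 * d + 1)) with (2 * S d)%nat by lia.
    rewrite Nat.even_even, Nat.even_odd.
    replace (2 * d + 1)%nat with (S (2 * d)) by lia. rewrite pow_1_odd. ring.
Qed.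

Lemma INR_le_node (mu : R) (k : nat) : 0 <= mu -> INR k <= node mu k.
Proof.
  intros Hmu. unfold node, theta. destruct (Nat.even k); lra.
Qed.

Lemma node_nonneg (mu : R) (k : nat) : 0 <= mu -> 0 <= node mu k.
Proof. intros Hmu. pose proof (INR_le_node mu k Hmu). pose proof (pos_INR k). lra. Qed.

Lemma gamma_mu_S (mu : R) (k : nat) : gamma_mu mu (S k) = gamma_mu mu k * node mu (S k).
Proof.
  unfold node, gamma_mu, theta.
  destruct (Nat.Even_or_Odd k) as [[d ->]|[d ->]].
  - replace (S (2 * d)) with (2 * d + 1)%nat by lia.
    rewrite Nat.even_odd, Nat.even_even.
    replace (2 * d + 1)%nat with (S (2 * d)) by lia.
    rewrite Nat.div2_succ_double, Nat.div2_double.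
    simpl poch. rewrite S_INR, mult_INR. simpl pow. simpl (INR 2). field.
  - replace (S (2 * d + 1)) with (2 * S d)%nat by lia.
    rewrite Nat.even_even, Nat.even_odd.
    replace (2 * d + 1)%nat with (S (2 * d)) by lia.
    rewrite Nat.div2_succ_double, Nat.div2_double.
    simpl poch. rewrite fact_simpl, mult_INR.
    replace (2 * S d)%nat with (S (S (2 * d))) by lia. simpl pow.
    rewrite !S_INR, mult_INR. simpl (INR 2). ring.
Qed.

Lemma gamma_mu_pos (mu : R) (k : nat) : 0 <= mu -> 0 < gamma_mu mu k.
Proof.
  intros Hmu. induction k as [|k IH].
  - unfold gamma_mu. simpl. lra.
  - rewrite gamma_mu_S. apply Rmult_lt_0_compat; [exact IH|].
    pose proof (INR_le_node mu (S k) Hmu). pose proof (lt_0_INR (S k) (Nat.lt_0_succ k)). lra.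
Qed.

Lemma fact_le_gamma_mu (mu : R) (k : nat) : 0 <= mu -> INR (Factorial.fact k) <= gamma_mu mu k.
Proof.
  intros Hmu. induction k as [|k IH].
  - unfold gamma_mu. simpl. lra.
  - rewrite gamma_mu_S, fact_simpl, mult_INR, Rmult_comm.
    apply Rmult_le_compat; [apply pos_INR | apply pos_INR | exact IH | apply INR_le_node, Hmu].
Qed.

Definition e_mu_term (mu y : R) (m : nat) : R := y ^ m / gamma_mu mu m.

Lemma e_mu_term_nonneg (mu y : R) (m : nat) : 0 <= mu -> 0 <= y -> 0 <= e_mu_term mu y m.
Proof.
  intros Hmu Hy. apply Rdiv_le_0_compat; [apply pow_le, Hy | apply gamma_mu_pos, Hmu].
Qed.

Lemma is_series_exp (u : R) : is_series (fun j => u ^ j / INR (Factorial.fact j)) (exp u).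
Proof.
  apply (is_series_ext_eq (fun j => / INR (Factorial.fact j) * u ^ j) _ (exp u));
    [intros j; unfold Rdiv; ring | reflexivity | apply is_pseries_R, is_exp_Reals].
Qed.

Lemma is_series_e_mu (mu y : R) : 0 <= mu -> is_series (e_mu_term mu y) (e_mu mu y).
Proof.
  intros Hmu. apply Series_correct.
  apply (@ex_series_le R_AbsRing R_CompleteNormedModule)
    with (fun m => Rabs y ^ m / INR (Factorial.fact m)); [|eexists; apply is_series_exp].
  intros m. change (Rabs (y ^ m / gamma_mu mu m) <= Rabs y ^ m / INR (Factorial.fact m)).
  pose proof (gamma_mu_pos mu m Hmu) as Hg.
  rewrite Rabs_div, <- RPow_abs, (Rabs_pos_eq (gamma_mu mu m)) by lra.
  apply Rmult_le_compat_l; [apply pow_le, Rabs_pos|].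
  apply Rinv_le_contravar; [apply INR_fact_lt_0 | apply fact_le_gamma_mu, Hmu].
Qed.

Lemma one_le_e_mu (mu y : R) : 0 <= mu -> 0 <= y -> 1 <= e_mu mu y.
Proof.
  intros Hmu Hy.
  pose proof (is_series_first_le _ _ (fun m => e_mu_term_nonneg mu y m Hmu Hy)
    (is_series_e_mu mu y Hmu)) as H.
  unfold e_mu_term, gamma_mu in H. simpl in H. lra.
Qed.

Lemma node_mul_e_mu_term (mu y : R) (m : nat) : 0 <= mu ->
  node mu (S m) * e_mu_term mu y (S m) = y * e_mu_term mu y m.
Proof.
  intros Hmu. unfold e_mu_term. rewrite gamma_mu_S. simpl pow.
  pose proof (gamma_mu_pos mu m Hmu). pose proof (INR_le_node mu (S m) Hmu).
  pose proof (lt_0_INR (S m) (Nat.lt_0_succ m)).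
  field. split; lra.
Qed.

Lemma is_series_e_mu_node (mu y : R) : 0 <= mu ->
  is_series (fun m => node mu m * e_mu_term mu y m) (y * e_mu mu y).
Proof.
  intros Hmu. apply is_series_of_succ; [unfold node, theta; simpl; ring|].
  apply (is_series_ext_eq (fun m => y * e_mu_term mu y m) _ (y * e_mu mu y));
    [intros m; symmetry; apply node_mul_e_mu_term, Hmu | reflexivity |].
  apply is_series_scal_l_R, is_series_e_mu, Hmu.
Qed.

Lemma is_series_e_mu_sign (mu y : R) : 0 <= mu ->
  is_series (fun m => (-1) ^ m * e_mu_term mu y m) (e_mu mu (- y)).
Proof.
  intros Hmu.
  apply (is_series_ext_eq (e_mu_term mu (- y)) _ (e_mu mu (- y)));
    [|reflexivity | apply is_series_e_mu, Hmu].
  intros m. unfold e_mu_term. replace (- y) with (-1 * y) by ring.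
  rewrite Rpow_mult_distr. unfold Rdiv. ring.
Qed.

Lemma is_series_e_mu_node2 (mu y : R) : 0 <= mu ->
  is_series (fun m => node mu m ^ 2 * e_mu_term mu y m)
    (y * (y * e_mu mu y + e_mu mu y + 2 * mu * e_mu mu (- y))).
Proof.
  intros Hmu. apply is_series_of_succ; [unfold node, theta; simpl; ring|].
  apply (is_series_ext_eq
    (fun m => y * ((node mu m * e_mu_term mu y m + e_mu_term mu y m)
                   + 2 * mu * ((-1) ^ m * e_mu_term mu y m))) _
    (y * (y * e_mu mu y + e_mu mu y + 2 * mu * e_mu mu (- y)))); [| reflexivity |].
  - intros m.
    replace (node mu (S m) ^ 2 * e_mu_term mu y (S m))
      with (node mu (S m) * (node mu (S m) * e_mu_term mu y (S m))) by ring.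
    rewrite node_mul_e_mu_term, node_S by exact Hmu. ring.
  - apply is_series_scal_l_R, is_series_plus_R; [apply is_series_plus_R|].
    + apply is_series_e_mu_node, Hmu.
    + apply is_series_e_mu, Hmu.
    + apply is_series_scal_l_R, is_series_e_mu_sign, Hmu.
Qed.

(** * Moments of the weights of T_n *)

Definition exp_even_term (u : R) (i : nat) : R :=
  if Nat.even i then u ^ Nat.div2 i / INR (Factorial.fact (Nat.div2 i)) else 0.

Lemma exp_even_term_nonneg (u : R) (i : nat) : 0 <= u -> 0 <= exp_even_term u i.
Proof.
  intros Hu. unfold exp_even_term. destruct (Nat.even i); [|lra].
  apply Rdiv_le_0_compat; [apply pow_le, Hu | apply INR_fact_lt_0].
Qed.

Lemma is_series_exp_even_term (u : R) : is_series (exp_even_term u) (exp u).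
Proof. exact (is_series_spread_even _ _ (is_series_exp u)). Qed.

Lemma INR_mul_exp_even_term (u : R) (j : nat) :
  INR (S (S j)) * exp_even_term u (S (S j)) = 2 * u * exp_even_term u j.
Proof.
  unfold exp_even_term. change (Nat.even (S (S j))) with (Nat.even j).
  change (Nat.div2 (S (S j))) with (S (Nat.div2 j)).
  destruct (Nat.Even_or_Odd j) as [[d ->]|[d ->]].
  - rewrite Nat.even_even, Nat.div2_double, fact_simpl, mult_INR, !S_INR, mult_INR.
    simpl (INR 2). simpl pow. pose proof (INR_fact_lt_0 d). pose proof (pos_INR d).
    field. lra.
  - rewrite Nat.even_odd. ring.
Qed.

Lemma is_series_exp_even_index (u : R) :
  is_series (fun i => INR i * exp_even_term u i) (2 * u * exp u).
Proof.
  apply is_series_of_succ; [simpl; ring|].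
  apply is_series_of_succ; [unfold exp_even_term; simpl; ring|].
  apply (is_series_ext_eq (fun j => 2 * u * exp_even_term u j) _ (2 * u * exp u));
    [intros j; symmetry; apply INR_mul_exp_even_term | reflexivity |].
  apply is_series_scal_l_R, is_series_exp_even_term.
Qed.

Lemma is_series_exp_even_index2 (u : R) :
  is_series (fun i => INR i ^ 2 * exp_even_term u i) (2 * u * (2 * u * exp u + 2 * exp u)).
Proof.
  apply is_series_of_succ; [simpl; ring|].
  apply is_series_of_succ; [unfold exp_even_term; simpl; ring|].
  apply (is_series_ext_eq
    (fun j => 2 * u * (INR j * exp_even_term u j + 2 * exp_even_term u j)) _
    (2 * u * (2 * u * exp u + 2 * exp u))); [| reflexivity |].
  - intros j.
    replace (INR (S (S j)) ^ 2 * exp_even_term u (S (S j)))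
      with (INR (S (S j)) * (INR (S (S j)) * exp_even_term u (S (S j)))) by ring.
    rewrite INR_mul_exp_even_term, !S_INR. ring.
  - apply is_series_scal_l_R, is_series_plus_R;
      [apply is_series_exp_even_index | apply is_series_scal_l_R, is_series_exp_even_term].
Qed.

Lemma exp_even_term_support (u mu : R) (i k : nat) : (i <= k)%nat ->
  exp_even_term u i = 0 \/ node mu k = INR i + node mu (k - i).
Proof.
  intros Hik. destruct (Nat.even i) eqn:Hi.
  - right. rewrite <- node_add_even by exact Hi. f_equal. lia.
  - left. unfold exp_even_term. rewrite Hi. reflexivity.
Qed.

Definition T_weight (u mu y : R) (k : nat) : R :=
  sum_f_R0 (fun i => exp_even_term u i * e_mu_term mu y (k - i)) k.

Lemma T_weight_nonneg (u mu y : R) (k : nat) :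
  0 <= u -> 0 <= mu -> 0 <= y -> 0 <= T_weight u mu y k.
Proof.
  intros Hu Hmu Hy. apply cond_pos_sum. intros i.
  apply Rmult_le_pos; [apply exp_even_term_nonneg, Hu | apply e_mu_term_nonneg; assumption].
Qed.

Lemma sum_f_R0_even (f : nat -> R) (N : nat) :
  sum_f_R0 (fun i => if Nat.even i then f i else 0) N
  = sum_f_R0 (fun j => f (2 * j)%nat) (Nat.div2 N).
Proof.
  set (E := fun i => if Nat.even i then f i else 0).
  assert (Hdouble : forall m, sum_f_R0 E (2 * m) = sum_f_R0 (fun j => f (2 * j)%nat) m
                           /\ sum_f_R0 E (S (2 * m)) = sum_f_R0 (fun j => f (2 * j)%nat) m).
  { induction m as [|m [IHe IHo]].
    - simpl. unfold E. simpl. split; ring.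
    - assert (Heven : sum_f_R0 E (2 * S m) = sum_f_R0 (fun j => f (2 * j)%nat) (S m)).
      { replace (2 * S m)%nat with (S (S (2 * m))) at 1 by lia.
        rewrite tech5, IHo, tech5. unfold E.
        replace (S (S (2 * m))) with (2 * S m)%nat by lia. rewrite Nat.even_even. reflexivity. }
      split; [exact Heven|].
      rewrite tech5, Heven. unfold E.
      replace (S (2 * S m)) with (2 * S m + 1)%nat by lia. rewrite Nat.even_odd. ring. }
  destruct (Nat.Even_or_Odd N) as [[d ->]|[d ->]].
  - rewrite Nat.div2_double. apply Hdouble.
  - replace (2 * d + 1)%nat with (S (2 * d)) by lia.
    rewrite Nat.div2_succ_double. apply Hdouble.
Qed.

Lemma T_weight_eq (alpha mu xi x : R) (k : nat) : 0 <= mu ->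
  h_mu mu k xi alpha / gamma_mu mu k * x ^ k = T_weight (alpha * x ^ 2) mu (xi * x) k.
Proof.
  intros Hmu. pose proof (gamma_mu_pos mu k Hmu) as Hgk.
  unfold h_mu, T_weight.
  transitivity (sum_f_R0 (fun j => alpha ^ j * xi ^ (k - 2 * j) /
      (INR (Factorial.fact j) * gamma_mu mu (k - 2 * j)) * x ^ k) (Nat.div2 k)).
  { rewrite <- scal_sum. field. lra. }
  rewrite (sum_eq (fun i => exp_even_term (alpha * x ^ 2) i * e_mu_term mu (xi * x) (k - i))
    (fun i => if Nat.even i then (alpha * x ^ 2) ^ Nat.div2 i
      / INR (Factorial.fact (Nat.div2 i)) * e_mu_term mu (xi * x) (k - i) else 0))
    by (intros i _; unfold exp_even_term; destruct (Nat.even i); ring).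
  rewrite sum_f_R0_even. apply sum_eq. intros j Hj.
  assert (H2j : (2 * j <= k)%nat).
  { pose proof (Nat.div2_odd k). destruct (Nat.odd k); simpl in *; lia. }
  rewrite Nat.div2_double. unfold e_mu_term.
  replace (x ^ k) with (x ^ (2 * j) * x ^ (k - 2 * j)) by (rewrite <- pow_add; f_equal; lia).
  rewrite !Rpow_mult_distr, pow_mult.
  pose proof (INR_fact_lt_0 j). pose proof (gamma_mu_pos mu (k - 2 * j) Hmu).
  field. split; lra.
Qed.

Section Moments.

Variables u mu y : R.
Hypotheses (Hu : 0 <= u) (Hmu : 0 <= mu) (Hy : 0 <= y).

Lemma is_series_T_weight : is_series (T_weight u mu y) (exp u * e_mu mu y).
Proof.
  apply is_series_mult_pos;
    [apply is_series_exp_even_term | apply is_series_e_mu, Hmu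
    | intros; apply exp_even_term_nonneg, Hu | intros; apply e_mu_term_nonneg; assumption].
Qed.

Lemma is_series_T_weight_node :
  is_series (fun k => T_weight u mu y k * node mu k)
    (2 * u * exp u * e_mu mu y + exp u * (y * e_mu mu y)).
Proof.
  pose proof (is_series_mult_pos _ _ _ _ (is_series_exp_even_index u) (is_series_e_mu mu y Hmu)
    (fun i => Rmult_le_pos _ _ (pos_INR i) (exp_even_term_nonneg u i Hu))
    (fun m => e_mu_term_nonneg mu y m Hmu Hy)) as Hindex.
  pose proof (is_series_mult_pos _ _ _ _ (is_series_exp_even_term u) (is_series_e_mu_node mu y Hmu)
    (fun i => exp_even_term_nonneg u i Hu)
    (fun m => Rmult_le_pos _ _ (node_nonneg mu m Hmu) (e_mu_term_nonneg mu y m Hmu Hy))) as Hnode.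
  refine (is_series_ext_eq _ _ _ _ _ eq_refl (is_series_plus_R _ _ _ _ Hindex Hnode)).
  intros k. cbv beta. unfold T_weight.
  rewrite Rmult_comm, scal_sum, <- plus_sum. apply sum_eq. intros i Hi.
  destruct (exp_even_term_support u mu i k Hi) as [-> | ->]; ring.
Qed.

Lemma is_series_T_weight_node2 :
  is_series (fun k => T_weight u mu y k * node mu k ^ 2)
    (2 * u * (2 * u * exp u + 2 * exp u) * e_mu mu y
     + 2 * (2 * u * exp u * (y * e_mu mu y))
     + exp u * (y * (y * e_mu mu y + e_mu mu y + 2 * mu * e_mu mu (- y)))).
Proof.
  pose proof (is_series_mult_pos _ _ _ _ (is_series_exp_even_index2 u) (is_series_e_mu mu y Hmu)
    (fun i => Rmult_le_pos _ _ (pow_le _ 2 (pos_INR i)) (exp_even_term_nonneg u i Hu))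
    (fun m => e_mu_term_nonneg mu y m Hmu Hy)) as Hindex2.
  pose proof (is_series_mult_pos _ _ _ _ (is_series_exp_even_index u) (is_series_e_mu_node mu y Hmu)
    (fun i => Rmult_le_pos _ _ (pos_INR i) (exp_even_term_nonneg u i Hu))
    (fun m => Rmult_le_pos _ _ (node_nonneg mu m Hmu) (e_mu_term_nonneg mu y m Hmu Hy))) as Hcross.
  pose proof (is_series_mult_pos _ _ _ _ (is_series_exp_even_term u) (is_series_e_mu_node2 mu y Hmu)
    (fun i => exp_even_term_nonneg u i Hu)
    (fun m => Rmult_le_pos _ _ (pow2_ge_0 (node mu m)) (e_mu_term_nonneg mu y m Hmu Hy))) as Hnode2.
  refine (is_series_ext_eq _ _ _ _ _ eq_refl (is_series_plus_R _ _ _ _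
    (is_series_plus_R _ _ _ _ Hindex2 (is_series_scal_l_R 2 _ _ Hcross)) Hnode2)).
  intros k. cbv beta. unfold T_weight.
  rewrite (Rmult_comm _ (node mu k ^ 2)), !scal_sum, <- !plus_sum. apply sum_eq. intros i Hi.
  destruct (exp_even_term_support u mu i k Hi) as [-> | ->]; ring.
Qed.

End Moments.

(** * Modulus of continuity *)

Section Modulus.

Variables (g : R -> R) (eta K : R).
Hypothesis Heta : 0 < eta.
Hypothesis HK : forall s t, 0 <= s -> 0 <= t -> Rabs (s - t) <= eta -> Rabs (g s - g t) <= K.

Lemma modulus_bound_nonneg : 0 <= K.
Proof.
  specialize (HK 0 0 (Rle_refl 0) (Rle_refl 0)).
  rewrite Rminus_0_r, Rabs_R0 in HK. pose proof (Rabs_pos (g 0 - g 0)). lra.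
Qed.

Lemma Rabs_sub_le_steps (N : nat) (s t : R) :
  0 <= t -> t <= s -> s - t <= INR N * eta -> Rabs (g s - g t) <= INR N * K.
Proof.
  pose proof modulus_bound_nonneg as HK0.
  revert s. induction N as [|N IH]; intros s Ht Hts HsN.
  - simpl in *. replace s with t by lra. rewrite Rminus_diag, Rabs_R0. lra.
  - rewrite S_INR in *. pose proof (pos_INR N).
    destruct (Rle_lt_dec (s - t) eta) as [Hnear|Hfar].
    + assert (Rabs (g s - g t) <= K) by (apply HK; [lra | lra | rewrite Rabs_pos_eq; lra]).
      nra.
    + replace (g s - g t) with ((g s - g (s - eta)) + (g (s - eta) - g t)) by ring.
      eapply Rle_trans; [apply Rabs_triang|].
      assert (Rabs (g s - g (s - eta)) <= K)
        by (apply HK; [lra | lra | rewrite Rabs_pos_eq; lra]).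
      assert (Rabs (g (s - eta) - g t) <= INR N * K) by (apply IH; lra).
      lra.
Qed.

Lemma Rabs_sub_le_modulus (s t : R) :
  0 <= s -> 0 <= t -> Rabs (g s - g t) <= (1 + Rabs (s - t) / eta) * K.
Proof.
  intros Hs Ht.
  assert (Hsym : forall a b, 0 <= b -> b <= a -> Rabs (g a - g b) <= (1 + (a - b) / eta) * K).
  { intros a b Hb Hba.
    destruct (Rcomplements.nfloor_ex ((a - b) / eta)) as [N [HN HN1]].
    { apply Rdiv_le_0_compat; lra. }
    apply Rle_trans with (INR (S N) * K).
    - apply Rabs_sub_le_steps; [lra | lra |].
      rewrite S_INR. apply Rmult_lt_compat_r with (r := eta) in HN1; [|exact Heta].
      unfold Rdiv in HN1. rewrite Rmult_assoc, Rinv_l, Rmult_1_r in HN1; lra.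
    - apply Rmult_le_compat_r; [apply modulus_bound_nonneg|]. rewrite S_INR. lra. }
  destruct (Rle_dec t s) as [Hts|Hst].
  - rewrite (Rabs_pos_eq (s - t)) by lra. apply Hsym; lra.
  - rewrite Rabs_minus_sym, (Rabs_minus_sym s t), (Rabs_pos_eq (t - s)) by lra. apply Hsym; lra.
Qed.

End Modulus.

Lemma omega_finite (g : R -> R) (delta : R) : unif_cont_nonneg g -> 0 < delta ->
  exists w, omega g delta = Finite w /\ 0 <= w /\
    forall s t, 0 <= s -> 0 <= t -> Rabs (s - t) <= delta -> Rabs (g s - g t) <= w.
Proof.
  intros Hg Hdelta.
  destruct (Hg 1 Rlt_0_1) as [eta [Heta Hclose]].
  assert (Hbound : forall s t, 0 <= s -> 0 <= t -> Rabs (s - t) <= delta ->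
                   Rabs (g s - g t) <= (1 + delta / (eta / 2)) * 1).
  { intros s t Hs Ht Hst.
    eapply Rle_trans; [apply (Rabs_sub_le_modulus g (eta / 2)); [lra | | exact Hs | exact Ht]|].
    - intros a b Ha Hb Hab. left. apply Hclose; [exact Ha | exact Hb | lra].
    - apply Rmult_le_compat_r; [lra|]. apply Rplus_le_compat_l.
      apply Rmult_le_compat_r; [left; apply Rinv_0_lt_compat; lra | exact Hst]. }
  set (A := fun y => exists s t, 0 <= s /\ 0 <= t /\ Rabs (s - t) <= delta /\
                                 y = Rabs (g s - g t)).
  assert (HA0 : A 0).
  { exists 0, 0. rewrite !Rminus_diag, Rabs_R0. repeat split; lra. }
  destruct (Lub_Rbar_correct A) as [Hub Hleast].
  unfold omega. fold A.
  destruct (Lub_Rbar A) as [w| |].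
  - exists w. split; [reflexivity|]. split; [exact (Hub 0 HA0)|].
    intros s t Hs Ht Hst. apply (Hub (Rabs (g s - g t))). exists s, t. repeat split; assumption.
  - exfalso. refine (Hleast (Finite ((1 + delta / (eta / 2)) * 1)) _).
    intros y [s [t [Hs [Ht [Hst ->]]]]]. apply Hbound; assumption.
  - exfalso. exact (Hub 0 HA0).
Qed.

(** * Positive series operators *)

Lemma Rabs_le_amgm (a s : R) : 0 < s -> Rabs a <= (a ^ 2 / s + s) / 2.
Proof.
  intros Hs. pose proof (pow2_ge_0 (Rabs a - s)) as Hsq.
  rewrite <- (pow2_abs a).
  apply Rmult_le_reg_r with (2 * s); [lra|].
  replace ((Rabs a ^ 2 / s + s) / 2 * (2 * s)) with (Rabs a ^ 2 + s ^ 2) by (field; lra).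
  nra.
Qed.

Lemma le_of_forall_amgm_bound (L w d V : R) : 0 <= w -> 0 < d -> 0 <= V ->
  (forall s, 0 < s -> L <= w * (1 + s / (2 * d)) + w * V / (2 * d * s)) ->
  L <= (1 + sqrt V / d) * w.
Proof.
  intros Hw Hd HV H.
  destruct HV as [HV | <-].
  - pose proof (sqrt_lt_R0 V HV) as Hs.
    replace ((1 + sqrt V / d) * w)
      with (w * (1 + sqrt V / (2 * d)) + w * (sqrt V * sqrt V) / (2 * d * sqrt V))
      by (field; lra).
    rewrite sqrt_sqrt by lra. exact (H _ Hs).
  - rewrite sqrt_0. replace ((1 + 0 / d) * w) with w by (field; lra).
    apply le_epsilon. intros eps Heps.
    assert (Hs : 0 < 2 * d * eps / (w + 1)) by (apply Rdiv_lt_0_compat; nra).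
    eapply Rle_trans; [exact (H _ Hs)|].
    replace (w * (1 + 2 * d * eps / (w + 1) / (2 * d)) + w * 0 / (2 * d * (2 * d * eps / (w + 1))))
      with (w + eps * (w / (w + 1))) by (field; lra).
    assert (w / (w + 1) <= 1) by (apply Rcomplements.Rle_div_l; lra).
    nra.
Qed.

Section PositiveSeriesEstimate.

Variables (g : R -> R) (d w : R).
Hypotheses (Hd : 0 < d) (Hw : 0 <= w).
Hypothesis Hg : forall s t, 0 <= s -> 0 <= t -> Rabs (g s - g t) <= (1 + Rabs (s - t) / d) * w.

Lemma Rabs_sub_le_quadratic (x z s : R) : 0 <= x -> 0 <= z -> 0 < s ->
  Rabs (g z - g x) <= w * (1 + s / (2 * d)) + w / (2 * d * s) * (z - x) ^ 2.
Proof.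
  intros Hx Hz Hs.
  apply Rle_trans with ((1 + ((z - x) ^ 2 / s + s) / 2 / d) * w).
  - eapply Rle_trans; [exact (Hg z x Hz Hx)|].
    apply Rmult_le_compat_r; [exact Hw|]. apply Rplus_le_compat_l.
    apply Rmult_le_compat_r; [left; apply Rinv_0_lt_compat, Hd | apply Rabs_le_amgm, Hs].
  - right. field. lra.
Qed.

Variables (W z : nat -> R) (x F V : R).
Hypotheses (HW : forall k, 0 <= W k) (Hz : forall k, 0 <= z k) (Hx : 0 <= x).
Hypotheses (HF : is_series W F) (HV : is_series (fun k => W k * (z k - x) ^ 2) (F * V)).

Lemma is_series_quadratic_majorant (s : R) :
  is_series (fun k => W k * (w * (1 + s / (2 * d)) + w / (2 * d * s) * (z k - x) ^ 2))
    (w * (1 + s / (2 * d)) * F + w / (2 * d * s) * (F * V)).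
Proof.
  apply (is_series_ext_eq
    (fun k => w * (1 + s / (2 * d)) * W k + w / (2 * d * s) * (W k * (z k - x) ^ 2)) _
    (w * (1 + s / (2 * d)) * F + w / (2 * d * s) * (F * V)));
    [intros k; ring | reflexivity |].
  apply is_series_plus_R; apply is_series_scal_l_R; assumption.
Qed.

Lemma positive_series_estimate : 0 < F ->
  Rabs (/ F * Series (fun k => W k * g (z k)) - g x) <= (1 + sqrt V / d) * w.
Proof.
  intros HFpos.
  assert (HV0 : 0 <= V).
  { assert (Hterm : forall k, 0 <= W k * (z k - x) ^ 2)
      by (intros k; apply Rmult_le_pos; [apply HW | apply pow2_ge_0]).
    pose proof (Rle_trans _ _ _ (Hterm O) (is_series_first_le _ _ Hterm HV)). nra. }
  assert (Hex : ex_series (fun k => W k * g (z k))).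
  { apply (@ex_series_le R_AbsRing R_CompleteNormedModule)
      with (fun k => Rabs (g x) * W k
                     + W k * (w * (1 + 1 / (2 * d)) + w / (2 * d * 1) * (z k - x) ^ 2)).
    - intros k. change (Rabs (W k * g (z k)) <= Rabs (g x) * W k
        + W k * (w * (1 + 1 / (2 * d)) + w / (2 * d * 1) * (z k - x) ^ 2)).
      pose proof (Rabs_sub_le_quadratic x (z k) 1 Hx (Hz k) Rlt_0_1).
      pose proof (Rabs_triang_inv (g (z k)) (g x)). pose proof (HW k).
      rewrite Rabs_mult, (Rabs_pos_eq (W k)) by exact (HW k). nra.
    - eexists. apply is_series_plus_R;
        [apply is_series_scal_l_R, HF | apply is_series_quadratic_majorant]. }
  assert (Hcentre : / F * Series (fun k => W k * g (z k)) - g x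
                    = / F * Series (fun k => W k * (g (z k) - g x))).
  { rewrite (Series_ext (fun k => W k * (g (z k) - g x)) (fun k => W k * g (z k) - g x * W k))
      by (intros k; ring).
    rewrite Series_minus, Series_scal_l, (is_series_unique _ _ HF);
      [field; lra | exact Hex | eexists; apply is_series_scal_l_R, HF]. }
  rewrite Hcentre, Rabs_mult, Rabs_inv, (Rabs_pos_eq F) by lra.
  apply le_of_forall_amgm_bound; [exact Hw | exact Hd | exact HV0 |].
  intros s Hs.
  eapply Rle_trans.
  - apply Rmult_le_compat_l; [left; apply Rinv_0_lt_compat, HFpos|].
    apply (Rabs_Series_le _ _ _ (is_series_quadratic_majorant s)). intros k.
    rewrite Rabs_mult, (Rabs_pos_eq (W k)) by exact (HW k).
    apply Rmult_le_compat_l; [exact (HW k)|].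
    apply Rabs_sub_le_quadratic; [exact Hx | apply Hz | exact Hs].
  - right. field. lra.
Qed.

End PositiveSeriesEstimate.

Lemma T_op_eq (alpha mu : R) (n : nat) (f : R -> R) (x : R) : 0 <= mu ->
  T_op alpha mu n f x = / (exp (alpha * x ^ 2) * e_mu mu (INR n * x)) *
    Series (fun k => T_weight (alpha * x ^ 2) mu (INR n * x) k * f (node mu k / INR n)).
Proof.
  intros Hmu. unfold T_op. f_equal. apply Series_ext. intros k.
  rewrite T_weight_eq by exact Hmu. reflexivity.
Qed.

Lemma is_series_T_weight_central (alpha mu : R) (n : nat) (x : R) :
  0 <= alpha -> 0 <= mu -> (0 < n)%nat -> 0 <= x ->
  is_series (fun k => T_weight (alpha * x ^ 2) mu (INR n * x) k * (node mu k / INR n - x) ^ 2)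
    (exp (alpha * x ^ 2) * e_mu mu (INR n * x) *
     ((/ INR n * x * (4 * x ^ 3 * alpha ^ 2 + 4 * x * alpha + INR n)
       + 2 * mu * x * (e_mu mu (- (INR n * x)) / e_mu mu (INR n * x))) / INR n)).
Proof.
  intros Halpha Hmu Hn Hx.
  pose proof (lt_0_INR n Hn) as HnR.
  assert (Hu : 0 <= alpha * x ^ 2) by (apply Rmult_le_pos; [exact Halpha | apply pow2_ge_0]).
  assert (Hy : 0 <= INR n * x) by (apply Rmult_le_pos; lra).
  pose proof (one_le_e_mu mu (INR n * x) Hmu Hy) as HE.
  pose proof (is_series_T_weight _ _ _ Hu Hmu Hy) as H0.
  pose proof (is_series_T_weight_node _ _ _ Hu Hmu Hy) as H1.
  pose proof (is_series_T_weight_node2 _ _ _ Hu Hmu Hy) as H2.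
  refine (is_series_ext_eq _ _ _ _ _ _ (is_series_plus_R _ _ _ _
    (is_series_plus_R _ _ _ _ (is_series_scal_l_R (/ INR n ^ 2) _ _ H2)
       (is_series_scal_l_R (- 2 * x / INR n) _ _ H1))
    (is_series_scal_l_R (x ^ 2) _ _ H0))).
  - intros k. cbv beta. field. lra.
  - field. lra.
Qed.

Theorem theorem7 (alpha mu : R) (g : R -> R) (n : nat) (x : R) :
  0 <= alpha -> 0 <= mu -> unif_cont_nonneg g -> (0 < n)%nat -> 0 <= x ->
  Rabs (T_op alpha mu n g x - g x) <=
  (1 + sqrt (/ INR n * x * (4 * x ^ 3 * alpha ^ 2 + 4 * x * alpha + INR n)
             + 2 * mu * x * (e_mu mu (- (INR n * x)) / e_mu mu (INR n * x))))
  * real (omega g (/ sqrt (INR n))).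
Proof.
  intros Halpha Hmu Hg Hn Hx.
  pose proof (lt_0_INR n Hn) as HnR.
  assert (Hdelta : 0 < / sqrt (INR n)) by (apply Rinv_0_lt_compat, sqrt_lt_R0, HnR).
  assert (Hu : 0 <= alpha * x ^ 2) by (apply Rmult_le_pos; [exact Halpha | apply pow2_ge_0]).
  assert (Hy : 0 <= INR n * x) by (apply Rmult_le_pos; lra).
  pose proof (Rmult_lt_0_compat _ _ (exp_pos (alpha * x ^ 2))
    (Rlt_le_trans _ _ _ Rlt_0_1 (one_le_e_mu mu _ Hmu Hy))) as HF.
  destruct (omega_finite g _ Hg Hdelta) as [w [-> [Hw Hgw]]].
  rewrite T_op_eq by exact Hmu. simpl real.
  eapply Rle_trans.
  - apply (positive_series_estimate g (/ sqrt (INR n)) w Hdelta Hw).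
    + intros s t Hs Ht. exact (Rabs_sub_le_modulus g _ w Hdelta Hgw s t Hs Ht).
    + intros k. apply T_weight_nonneg; assumption.
    + intros k. apply Rdiv_le_0_compat; [apply node_nonneg, Hmu | exact HnR].
    + exact Hx.
    + apply is_series_T_weight; assumption.
    + apply is_series_T_weight_central; assumption.
    + exact HF.
  - right. f_equal. f_equal.
    pose proof (sqrt_lt_R0 _ HnR). rewrite sqrt_div_alt by exact HnR. field. lra.
Qed.
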